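(* Let $\Gamma$ be a graph that is generically locally rigid in $\mathbb C^d$, let $\rho$ be a generic framework of $\Gamma$ in $\mathbb C^d$, and let $\sigma$ be any framework of $\Gamma$ in $\mathbb C^d$ equivalent to $\rho$. Then $\sigma$ is infinitesimally rigid (in particular, when $\Gamma$ has at least $d+2$ vertices, the points of $\sigma$ affinely span $\mathbb C^d$).
   Context: In $\mathbb C^d$ the squared length is $|w|^2=\sum_i w_i^2$ (no conjugation). A graph $\Gamma$ has $v$ vertices $\mathcal V$ and edges $\mathcal E$; a framework is a map $\mathcal V\to\mathbb C^d$. Frameworks $\rho,\sigma$ are equivalent if $|\rho(t)-\rho(u)|^2=|\sigma(t)-\sigma(u)|^2$ for all edges. The rigidity matrix of $\rho$ has one row per edge $\{t,u\}$, with entries $\rho(t)-\rho(u)$ in the $d$ columns of $t$, $\rho(u)-\rho(t)$ in the $d$ columns of $u$, and zeros elsewhere. $\rho$ is infinitesimally rigid if this matrix has rank $vd-\binom{d+1}{2}$ when $v\ge d+1$, and rank $\binom v2$ when $v\le d+1$. A framework is generic if its coordinates satisfy no nonzero polynomial equation with rational coefficients. $\Gamma$ is generically locally rigid in $\mathbb C^d$ if every generic framework of $\Gamma$ in $\mathbb C^d$ is infinitesimally rigid. *)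

From HB Require Import structures.
From mathcomp Require Import all_boot all_order all_algebra.
Set Implicit Arguments. Unset Strict Implicit. Unset Printing Implicit Defensive.
Import Order.TTheory GRing.Theory Num.Theory.
Local Open Scope ring_scope.

(* Multivariate polynomials with rational coefficients in n variables,
   Q[x_0,...,x_{n-1}], built as iterated univariate polynomial rings. *)
Fixpoint mpoly (n : nat) : comNzRingType :=
  match n with
  | 0 => rat
  | n'.+1 => {poly mpoly n'}
  end.

(* Evaluation of p in Q[x_0..x_{n-1}] at a point x : 'I_n -> F
   (the outermost variable is x_{n-1}). *)
Fixpoint meval (F : fieldType) (n : nat) : mpoly n -> ('I_n -> F) -> F :=
  match n return mpoly n -> ('I_n -> F) -> F with
  | 0 => fun q _ => ratr q
  | n'.+1 => fun p x =>
      (map_poly (fun c : mpoly n' => meval c (fun i => x (widen_ord (leqnSn n') i))) p).[x ord_max]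
  end.

(* A framework of a graph on v vertices in F^d: row t is the point rho(t). *)
Definition framework (F : fieldType) (v d : nat) := 'M[F]_(v, d).

(* Squared length without conjugation. *)
Definition sqlen (F : fieldType) (d : nat) (w : 'rV[F]_d) : F := \sum_i w 0 i ^+ 2.

Definition generic (F : fieldType) (v d : nat) (rho : framework F v d) : Prop :=
  forall p : mpoly (v * d), p != 0 -> meval p (fun k => mxvec rho 0 k) != 0.

Definition equivalent (F : fieldType) (v d : nat) (e : rel 'I_v)
  (rho sigma : framework F v d) : Prop :=
  forall t u, e t u ->
    sqlen (row t rho - row u rho) = sqlen (row t sigma - row u sigma).

(* Edge set: unordered pairs {t,u}, represented by t < u. *)
Definition edges (v : nat) (e : rel 'I_v) : {set 'I_v * 'I_v} :=
  [set p | e p.1 p.2 && (p.1 < p.2)%N].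

(* The rigidity-matrix row of the edge {t,u}, viewed as a v x d matrix:
   rho(t)-rho(u) in the block of t, rho(u)-rho(t) in the block of u. *)
Definition edge_row (F : fieldType) (v d : nat) (rho : framework F v d)
  (p : 'I_v * 'I_v) : 'M[F]_(v, d) :=
  \matrix_(s, j) (if s == p.1 then rho p.1 j - rho p.2 j
                  else if s == p.2 then rho p.2 j - rho p.1 j else 0).

Definition rigidity_matrix (F : fieldType) (v d : nat) (e : rel 'I_v)
  (rho : framework F v d) : 'M[F]_(#|edges e|, v * d) :=
  \matrix_(k < #|edges e|) mxvec (edge_row rho (enum_val k)).

Definition inf_rigid (F : fieldType) (v d : nat) (e : rel 'I_v)
  (rho : framework F v d) : Prop :=
  \rank (rigidity_matrix e rho) =
    (if (d.+1 <= v)%N then v * d - 'C(d.+1, 2) else 'C(v, 2))%N.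

Definition gen_loc_rigid (F : fieldType) (v d : nat) (e : rel 'I_v) : Prop :=
  forall rho : framework F v d, generic rho -> inf_rigid e rho.

(* We show that the
   rigidity matrices [R(rho)] and [R(sigma)] have the same rank; since the
   graph is generically locally rigid, [R(rho)] has the rank required by
   [inf_rigid], hence so does [R(sigma)].
   - [rank R(sigma) <= rank R(rho)]: [R] is a polynomial matrix in the
     coordinates, and a nonzero minor at [sigma] is a nonzero polynomial,
     which cannot vanish at the generic point [rho].
   - [rank R(rho) <= rank R(sigma)]: the partial derivative [d/drho_j] is a
     derivation of the field [Q(rho)]; in characteristic 0 it extends to a
     derivation [D] of a field containing the coordinates of [sigma].
     Applying [D] to [|sigma(t)-sigma(u)|^2 = |rho(t)-rho(u)|^2] shows that
     column [j] of [R(rho)] equals [R(sigma)] times the vector [D(sigma)]. *)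

From HB Require Import structures.
From mathcomp Require Import all_boot all_order all_algebra.
From mathcomp Require Import ring.
From Stdlib Require Import Classical ClassicalEpsilon Wf_nat.
Import GRing.Theory.
Set Implicit Arguments. Unset Strict Implicit. Unset Printing Implicit Defensive.
Local Open Scope ring_scope.

Section RatInCharZero.
Variables (F : fieldType) (hF : [pchar F] =i pred0).

Lemma pchar0_intr_eq0 (z : int) : (z%:~R == 0 :> F) = (z == 0).
Proof.
have natr_eq0 := (pcharf0P F).1 hF.
by case: z => n; rewrite ?NegzE ?rmorphN ?oppr_eq0 /intmul /= natr_eq0.
Qed.

Lemma ratr_intr_div (a b : int) : b != 0 -> ratr (a%:~R / b%:~R) = a%:~R / b%:~R :> F.
Proof.
move=> b0; set q : rat := _ / _.
have bF : b%:~R != 0 :> F by rewrite pchar0_intr_eq0.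
have dF : (denq q)%:~R != 0 :> F by rewrite pchar0_intr_eq0 denq_neq0.
have cross : numq q * b = a * denq q.
  apply: (@intr_inj rat); rewrite !rmorphM /= numqE /q mulrAC divfK //.
  by rewrite intr_eq0.
by apply/eqP; rewrite /ratr eqr_div // -!rmorphM /= cross.
Qed.

Lemma ratr_zmod_pchar0 : zmod_morphism (@ratr F).
Proof.
move=> x y; rewrite -[x]divq_num_den -[y]divq_num_den.
have [bQ eQ] := (denq_neq0 x, denq_neq0 y).
have [bF eF] : (denq x)%:~R != 0 :> F /\ (denq y)%:~R != 0 :> F.
  by rewrite !pchar0_intr_eq0.
rewrite -[_ - _](_ : ((numq x * denq y - numq y * denq x)%:~R / (denq x * denq y)%:~R) = _).
  by rewrite !ratr_intr_div ?mulf_neq0 // rmorphB !rmorphM; field; apply/andP.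
by rewrite rmorphB !rmorphM; field; rewrite !intr_eq0; apply/andP.
Qed.

Lemma ratr_monoid_pchar0 : monoid_morphism (@ratr F).
Proof.
split=> [|x y]; first by rewrite /ratr divr1.
rewrite -[x]divq_num_den -[y]divq_num_den.
have [bQ eQ] := (denq_neq0 x, denq_neq0 y).
have [bF eF] : (denq x)%:~R != 0 :> F /\ (denq y)%:~R != 0 :> F.
  by rewrite !pchar0_intr_eq0.
rewrite -[_ * _](_ : ((numq x * numq y)%:~R / (denq x * denq y)%:~R) = _).
  by rewrite !ratr_intr_div ?mulf_neq0 // !rmorphM; field; apply/andP.
by rewrite !rmorphM; field; rewrite !intr_eq0; apply/andP.
Qed.

End RatInCharZero.

(* [ratr], tagged with the characteristic hypothesis that makes it a ring
   morphism. *)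
Definition ratr_pchar0 (F : fieldType) of [pchar F] =i pred0 : rat -> F := @ratr F.
HB.instance Definition _ (F : fieldType) (hF : [pchar F] =i pred0) :=
  GRing.isZmodMorphism.Build rat F (ratr_pchar0 hF) (ratr_zmod_pchar0 hF).
HB.instance Definition _ (F : fieldType) (hF : [pchar F] =i pred0) :=
  GRing.isMonoidMorphism.Build rat F (ratr_pchar0 hF) (ratr_monoid_pchar0 hF).

Section Evaluation.
Variables (F : fieldType) (hF : [pchar F] =i pred0).

(* Evaluation of rational polynomials at a point of [F^n] is a ring
   morphism: at each level it is a coefficient map followed by Horner
   evaluation at the last coordinate. *)
Lemma meval_rmorph (n : nat) (x : 'I_n -> F) :
  {f : {rmorphism mpoly n -> F} | forall p, f p = meval p x}.
Proof.
elim: n x => [|n IH] x; first by exists (ratr_pchar0 hF).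
have [f Hf] := IH (fun i => x (widen_ord (leqnSn n) i)).
exists (horner_eval (x ord_max) \o map_poly f) => p /=.
by rewrite horner_evalE; congr (_.[_]); apply: eq_map_poly => c; exact: Hf.
Qed.

Lemma meval_zmod n (x : 'I_n -> F) : zmod_morphism (fun p : mpoly n => meval p x).
Proof. by have [f Hf] := meval_rmorph x => p q; rewrite -!Hf rmorphB. Qed.

Lemma meval_monoid n (x : 'I_n -> F) : monoid_morphism (fun p : mpoly n => meval p x).
Proof.
have [f Hf] := meval_rmorph x.
by split=> [|p q]; rewrite -!Hf ?rmorph1 ?rmorphM.
Qed.

End Evaluation.

Definition meval_at (F : fieldType) (n : nat) (x : 'I_n -> F)
  of [pchar F] =i pred0 : mpoly n -> F := fun p => meval p x.
HB.instance Definition _ (F : fieldType) (n : nat) (x : 'I_n -> F) (hF : [pchar F] =i pred0) :=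
  GRing.isZmodMorphism.Build (mpoly n) F (meval_at x hF) (meval_zmod hF x).
HB.instance Definition _ (F : fieldType) (n : nat) (x : 'I_n -> F) (hF : [pchar F] =i pred0) :=
  GRing.isMonoidMorphism.Build (mpoly n) F (meval_at x hF) (meval_monoid hF x).

Lemma map_polyC_id0 (R R' : nzSemiRingType) (f : R -> R') (c : R) :
  f 0 = 0 -> map_poly f c%:P = (f c)%:P.
Proof. by move=> f0; apply/polyP => i; rewrite coef_map_id0 // !coefC; case: ifP. Qed.

Definition leibniz (R : comNzRingType) (dl : R -> R) : Prop :=
  {morph dl : a b / a + b} /\ forall a b, dl (a * b) = dl a * b + a * dl b.

Section Leibniz.
Variable R : comNzRingType.

Lemma leibniz0 (dl : R -> R) : leibniz dl -> dl 0 = 0.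
Proof. by case=> dlD _; apply: (@addrI _ (dl 0)); rewrite -dlD !addr0. Qed.

Lemma leibniz1 (dl : R -> R) : leibniz dl -> dl 1 = 0.
Proof.
case=> _ dlM; have := dlM 1 1; rewrite !mulr1 mul1r => dl1.
by apply: (@addrI _ (dl 1)); rewrite addr0 -dl1.
Qed.

Lemma map_poly_leibniz (dl : R -> R) : leibniz dl -> leibniz (R := {poly R}) (map_poly dl).
Proof.
move=> hdl; have dl0 := leibniz0 hdl; have [dlD dlM] := hdl.
split=> [p q|p q]; apply/polyP => i; rewrite ?coefD !coef_map_id0 //.
  by rewrite coefD dlD.
rewrite !coefM (big_morph dl dlD dl0) -big_split /=; apply: eq_bigr => k _.
by rewrite dlM !coef_map_id0 // [p`_k * _]mulrC.
Qed.

Lemma deriv_leibniz : leibniz (R := {poly R}) (@deriv R).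
Proof. by split=> [p q|p q]; rewrite ?derivD ?derivM. Qed.

End Leibniz.

Fixpoint mderiv (j n : nat) : mpoly n -> mpoly n :=
  match n return mpoly n -> mpoly n with
  | 0 => fun _ => 0
  | n'.+1 => fun p => if j == n' then deriv p else map_poly (@mderiv j n') p
  end.

(* The variable x_k of Q[x_0..x_{n-1}] (zero when k >= n). *)
Fixpoint mvar (n k : nat) : mpoly n :=
  match n return mpoly n with
  | 0 => 0
  | n'.+1 => if k == n' then 'X else (mvar n' k)%:P
  end.

Lemma mderiv_leibniz j n : leibniz (@mderiv j n).
Proof.
elim: n => [|n IH] /=; first by split=> [a b|a b]; rewrite ?mul0r ?mulr0 addr0.
by case: (j == n); [exact: deriv_leibniz | exact: map_poly_leibniz].
Qed.

Lemma mderiv_mvar j n k : (k < n)%N -> mderiv j (mvar n k) = (k == j)%:R.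
Proof.
elim: n => [|n IH] //= kn.
have mderiv0 := leibniz0 (mderiv_leibniz j n).
have [->|jn] := eqVneq j n.
  by case: (eqVneq k n) => [_|kn']; rewrite ?derivX ?derivC.
have [kE|kn'] := eqVneq k n.
  rewrite kE eq_sym (negbTE jn); apply/polyP => i.
  rewrite coef_map_id0 // coefX coef0.
  by case: (i == 1)%N; rewrite ?(leibniz1 (mderiv_leibniz _ _)).
by rewrite map_polyC_id0 // IH ?polyC_natr // ltn_neqAle kn' -ltnS.
Qed.

Section VariableEvaluation.
Variables (F : fieldType) (hF : [pchar F] =i pred0).

Lemma meval_mvar n (x : 'I_n -> F) (k : 'I_n) : meval (mvar n k) x = x k.
Proof.
elim: n x k => [|n IH] x [k kn] //=.
rewrite (@eq_map_poly _ _ _ (meval_at (fun i => x (widen_ord (leqnSn n) i)) hF)) //.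
have [kE|kn'] := eqVneq k n.
  by rewrite map_polyX hornerX; congr x; apply: val_inj.
have kn2 : (k < n)%N by rewrite ltn_neqAle kn' -ltnS.
by rewrite map_polyC hornerC [LHS](IH _ (Ordinal kn2)); congr x; apply: val_inj.
Qed.

End VariableEvaluation.

Section Derivations.
Variable F : fieldType.

Record subfield (S : F -> Prop) : Prop := SubField {
  sf0 : S 0; sf1 : S 1;
  sfD : forall a b, S a -> S b -> S (a + b);
  sfN : forall a, S a -> S (- a);
  sfM : forall a b, S a -> S b -> S (a * b);
  sfV : forall a, S a -> S a^-1 }.

Record derivation (S : F -> Prop) (D : F -> F) : Prop := Derivation {
  derD : forall a b, S a -> S b -> D (a + b) = D a + D b;
  derM : forall a b, S a -> S b -> D (a * b) = a * D b + b * D a }.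

Variables (S : F -> Prop) (D : F -> F).
Hypotheses (hS : subfield S) (hD : derivation S D).

Lemma der0 : D 0 = 0.
Proof.
have := derD hD (sf0 hS) (sf0 hS); rewrite addr0 => D0.
by apply: (@addrI _ (D 0)); rewrite addr0 -D0.
Qed.

Lemma derN a : S a -> D (- a) = - D a.
Proof.
move=> Sa; have := derD hD Sa (sfN hS Sa); rewrite subrr der0 => /esym/eqP.
by rewrite addrC addr_eq0 => /eqP.
Qed.

Lemma derB a b : S a -> S b -> D (a - b) = D a - D b.
Proof. by move=> Sa Sb; rewrite (derD hD) ?derN //; exact: (sfN hS). Qed.

Lemma sum_in (I : Type) (r : seq I) (f : I -> F) :
  (forall i, S (f i)) -> S (\sum_(i <- r) f i).
Proof. by move=> Sf; elim/big_ind: _ => //; [exact: (sf0 hS) | exact: (sfD hS)]. Qed.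

Lemma der_sum (I : Type) (r : seq I) (f : I -> F) :
  (forall i, S (f i)) -> D (\sum_(i <- r) f i) = \sum_(i <- r) D (f i).
Proof.
move=> Sf; elim: r => [|i r IH]; first by rewrite !big_nil der0.
by rewrite !big_cons (derD hD) ?IH //; exact: sum_in.
Qed.

Lemma der_sqlen d (w : 'rV[F]_d) : (forall i, S (w 0 i)) ->
  D (sqlen w) = 2 * \sum_i w 0 i * D (w 0 i).
Proof.
move=> Sw; rewrite /sqlen der_sum => [|i]; last by rewrite expr2; exact: (sfM hS).
rewrite big_distrr; apply: eq_bigr => i _.
by rewrite expr2 (derM hD) // [RHS]mulr_natl mulr2n.
Qed.

End Derivations.

Section QuotientDerivation.
(* Let [ev : R -> F] be a ring morphism, [P] a subring of [R], and [E] an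
   "[ev]-derivation" on [P] vanishing on the kernel of [ev].  Then the
   quotient rule [(p/q)' = (p' q - p q') / q^2] gives a well-defined
   derivation of the subfield of [F] made of the quotients [ev p / ev q]. *)
Variables (F : fieldType) (R : comNzRingType).
Variables (P : R -> Prop) (ev : {rmorphism R -> F}) (E : R -> F).
Hypotheses (P1 : P 1) (PD : forall p q, P p -> P q -> P (p + q))
  (PN : forall p, P p -> P (- p)) (PM : forall p q, P p -> P q -> P (p * q)).
Hypotheses (ED : forall p q, P p -> P q -> E (p + q) = E p + E q)
  (EM : forall p q, P p -> P q -> E (p * q) = ev p * E q + ev q * E p)
  (Eker : forall p, P p -> ev p = 0 -> E p = 0).

Definition frac (z : F) : Prop :=
  exists p q, [/\ P p, P q, ev q != 0 & z = ev p / ev q].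

Definition quot_der (p q : R) : F := (E p * ev q - ev p * E q) / ev q ^+ 2.

Definition frac_der (z : F) : F :=
  let pq := epsilon (inhabits (0 : R, 0 : R))
    (fun pq => [/\ P pq.1, P pq.2, ev pq.2 != 0 & z = ev pq.1 / ev pq.2]) in
  quot_der pq.1 pq.2.

Lemma subring0 : P 0.
Proof. by rewrite -(addNr 1); auto. Qed.

Lemma ev_der0 : E 0 = 0.
Proof. exact: Eker subring0 (rmorph0 ev). Qed.

Lemma ev_derN p : P p -> E (- p) = - E p.
Proof. by move=> Pp; apply/eqP; rewrite -addr_eq0 -ED ?addNr ?ev_der0; auto. Qed.

Lemma frac_ev p : P p -> frac (ev p).
Proof. by move=> Pp; exists p, 1; rewrite rmorph1 oner_eq0 divr1; split. Qed.

Lemma frac_subfield : subfield frac.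
Proof.
split; first by rewrite -(rmorph0 ev); exact: frac_ev subring0.
- by rewrite -(rmorph1 ev); exact: frac_ev P1.
- move=> _ _ [p1 [q1 [Pp1 Pq1 q10 ->]]] [p2 [q2 [Pp2 Pq2 q20 ->]]].
  exists (p1 * q2 + p2 * q1), (q1 * q2); split; auto.
    by rewrite rmorphM mulf_neq0.
  by rewrite rmorphD !rmorphM; field; apply/andP.
- move=> _ [p [q [Pp Pq q0 ->]]].
  by exists (- p), q; split; rewrite ?rmorphN ?mulNr; auto.
- move=> _ _ [p1 [q1 [Pp1 Pq1 q10 ->]]] [p2 [q2 [Pp2 Pq2 q20 ->]]].
  exists (p1 * p2), (q1 * q2); split; auto.
    by rewrite rmorphM mulf_neq0.
  by rewrite !rmorphM; field; apply/andP.
- move=> _ [p [q [Pp Pq q0 ->]]].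
  have [p0|p0] := eqVneq (ev p) 0.
    exists 0, 1; split; [exact: subring0 | exact: P1 | by rewrite rmorph1 oner_eq0 |].
    by rewrite p0 mul0r invr0 rmorph0 mul0r.
  by exists q, p; split; rewrite ?invf_div.
Qed.

(* The quotient rule does not depend on the chosen representation: it only
   needs the cross-multiplied equation and its derivative. *)
Lemma quot_der_wd p q p' q' : P p -> P q -> P p' -> P q' ->
  ev q != 0 -> ev q' != 0 -> ev p / ev q = ev p' / ev q' ->
  quot_der p q = quot_der p' q'.
Proof.
move=> Pp Pq Pp' Pq' q0 q'0 eq_pq.
have cross : ev p' = ev p * ev q' / ev q.
  by rewrite mulrAC eq_pq divfK.
have : E (p * q' - p' * q) = 0 by apply: Eker; auto; rewrite rmorphB !rmorphM cross divfK ?subrr.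
rewrite ED ?ev_derN ?EM; auto; rewrite cross => /eqP; rewrite subr_eq0 => /eqP Ecross.
rewrite /quot_der cross.
have -> : E p' = (ev p * E q' + ev q' * E p - ev p * ev q' / ev q * E q) / ev q.
  by rewrite Ecross addrC addKr; field.
by field; apply/andP.
Qed.

Lemma frac_derE p q : P p -> P q -> ev q != 0 -> frac_der (ev p / ev q) = quot_der p q.
Proof.
move=> Pp Pq q0; rewrite /frac_der.
set spec := (fun pq : R * R => _).
have : spec (epsilon (inhabits (0 : R, 0 : R)) spec).
  by apply: epsilon_spec; exists (p, q).
by case: (epsilon _ spec) => p' q' [/= Pp' Pq' q'0 eq_pq]; apply: quot_der_wd.
Qed.

Lemma frac_der_ev p : P p -> frac_der (ev p) = E p.
Proof.
move=> Pp; rewrite -[ev p]divr1 -(rmorph1 ev) frac_derE ?rmorph1 ?oner_eq0 //.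
have E1 : E 1 = 0.
  have := EM P1 P1; rewrite mulr1 rmorph1 !mul1r => E11.
  by apply: (@addrI _ (E 1)); rewrite addr0 -E11.
by rewrite /quot_der E1 rmorph1 mulr0 subr0 expr1n !mulr1 divr1.
Qed.

Lemma frac_der_derivation : derivation frac frac_der.
Proof.
split=> _ _ [p1 [q1 [Pp1 Pq1 q10 ->]]] [p2 [q2 [Pp2 Pq2 q20 ->]]].
  have -> : ev p1 / ev q1 + ev p2 / ev q2 = ev (p1 * q2 + p2 * q1) / ev (q1 * q2).
    by rewrite rmorphD !rmorphM; field; apply/andP.
  rewrite !frac_derE ?rmorphM ?mulf_neq0; auto.
  by rewrite /quot_der ED ?EM ?rmorphD ?rmorphM; auto; field; apply/andP.
have -> : ev p1 / ev q1 * (ev p2 / ev q2) = ev (p1 * p2) / ev (q1 * q2).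
  by rewrite !rmorphM; field; apply/andP.
rewrite !frac_derE ?rmorphM ?mulf_neq0; auto.
by rewrite /quot_der !EM ?rmorphM; auto; field; apply/andP.
Qed.

End QuotientDerivation.

Section PolyFacts.
Variables (F : fieldType) (hF : [pchar F] =i pred0).

Lemma deriv_neq0 (p : {poly F}) : (1 < size p)%N -> p^`() != 0.
Proof.
move=> p_gt1; apply/eqP => /(congr1 (fun q : {poly F} => q`_(size p).-2)).
rewrite coef_deriv coef0.
have -> : (size p).-2.+1 = (size p).-1 by case: (size p) p_gt1 => [|[|k]].
rewrite -lead_coefE -mulr_natr => /eqP.
rewrite mulf_eq0 lead_coef_eq0 ((pcharf0P F).1 hF) -size_poly_eq0.
by case: (size p) p_gt1 => [|[|k]].
Qed.

Lemma size_sub_lead (p q : {poly F}) : p != 0 ->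
  size q = size p -> lead_coef q = lead_coef p -> (size (p - q)%R < size p)%N.
Proof.
move=> p0 sq; have p_gt0 : (0 < size p)%N by rewrite size_poly_gt0.
rewrite !lead_coefE sq => lq.
rewrite -(prednK p_gt0) ltnS; apply/leq_sizeP => j.
rewrite leq_eqVlt => /orP [/eqP <-|hj]; first by rewrite coefB lq subrr.
by rewrite coefB !nth_default ?subrr ?sq // -(prednK p_gt0).
Qed.

End PolyFacts.

Section AdjoinElement.
(* Extending a derivation [D] of a subfield [S] to the field [S(a)]
   generated by one more element [a] (characteristic 0). *)
Variables (F : fieldType) (hF : [pchar F] =i pred0).
Variables (S : F -> Prop) (D : F -> F) (a : F).
Hypotheses (hS : subfield S) (hD : derivation S D).

Definition polyIn (p : {poly F}) : Prop := forall i, S p`_i.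

Lemma polyInC c : S c -> polyIn c%:P.
Proof. by move=> Sc i; rewrite coefC; case: ifP => _ //; exact: (sf0 hS). Qed.

Lemma polyIn0 : polyIn 0.
Proof. by move=> i; rewrite coef0; exact: (sf0 hS). Qed.

Lemma polyIn1 : polyIn 1.
Proof. exact: polyInC (sf1 hS). Qed.

Lemma polyInD p q : polyIn p -> polyIn q -> polyIn (p + q).
Proof. by move=> Sp Sq i; rewrite coefD; exact: (sfD hS). Qed.

Lemma polyInN p : polyIn p -> polyIn (- p).
Proof. by move=> Sp i; rewrite coefN; exact: (sfN hS). Qed.

Lemma polyInM p q : polyIn p -> polyIn q -> polyIn (p * q).
Proof. by move=> Sp Sq i; rewrite coefM; apply: (sum_in hS) => j; exact: (sfM hS). Qed.

Lemma S_mulrn c n : S c -> S (c *+ n).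
Proof. by move=> Sc; elim: n => [|n IH]; [exact: (sf0 hS) | rewrite mulrS; exact: (sfD hS)]. Qed.

Lemma polyInXn n : polyIn 'X^n.
Proof. by move=> i; rewrite coefXn; apply: S_mulrn; exact: (sf1 hS). Qed.

Lemma polyIn_deriv p : polyIn p -> polyIn p^`().
Proof. by move=> Sp i; rewrite coef_deriv; exact: S_mulrn. Qed.

(* A candidate extension: differentiate the coefficients with [D] and
   let [D a = c]. *)
Definition ext_der (c : F) (p : {poly F}) : F :=
  (map_poly D p).[a] + p^`().[a] * c.

Lemma ext_derD c p q : polyIn p -> polyIn q ->
  ext_der c (p + q) = ext_der c p + ext_der c q.
Proof.
move=> Sp Sq; have D0 := der0 hS hD; rewrite /ext_der.
have -> : map_poly D (p + q) = map_poly D p + map_poly D q.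
  by apply/polyP => i; rewrite coefD !coef_map_id0 // coefD (derD hD).
by rewrite derivD !hornerD; ring.
Qed.

Lemma ext_derM c p q : polyIn p -> polyIn q ->
  ext_der c (p * q) = p.[a] * ext_der c q + q.[a] * ext_der c p.
Proof.
move=> Sp Sq; have D0 := der0 hS hD; rewrite /ext_der.
have -> : map_poly D (p * q) = map_poly D p * q + p * map_poly D q.
  apply/polyP => i; rewrite coefD !coefM coef_map_id0 // coefM.
  rewrite (der_sum hS hD) => [|j]; last exact: (sfM hS).
  rewrite -big_split /=; apply: eq_bigr => j _.
  by rewrite (derM hD) // !coef_map_id0 //; ring.
by rewrite derivM !hornerD !hornerM; ring.
Qed.

Section MinimalAnnihilator.
Variable g : {poly F}.
Hypotheses (Sg : polyIn g) (g0 : g != 0) (ga : g.[a] = 0).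
Hypothesis gmin : forall h, polyIn h -> (size h < size g)%N -> h.[a] = 0 -> h = 0.

Lemma annihilator_dvd p : polyIn p -> p.[a] = 0 -> exists2 h, polyIn h & p = h * g.
Proof.
have [k] := ubnP (size p); elim: k p => [|k IH] p //; rewrite ltnS => pk Sp pa.
have [p0|p0] := eqVneq p 0; first by exists 0; [exact: polyIn0 | rewrite mul0r].
have [pg|gp] := ltnP (size p) (size g).
  by exists 0; [exact: polyIn0 | rewrite mul0r (gmin Sp)].
have lg0 : lead_coef g != 0 by rewrite lead_coef_eq0.
have lp0 : lead_coef p != 0 by rewrite lead_coef_eq0.
pose h := (lead_coef p / lead_coef g)%:P * 'X^(size p - size g).
have Sh : polyIn h.
  apply: polyInM (polyInXn _); apply: polyInC; apply: (sfM hS) (Sp _) _.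
  exact: (sfV hS) (Sg _).
have hl0 : lead_coef p / lead_coef g != 0 by rewrite mulf_neq0 ?invr_eq0.
have shg : size (h * g) = size p.
  have sh : size h = (size p - size g).+1.
    by rewrite /h mul_polyC size_scale ?size_polyXn.
  by rewrite size_mul ?sh ?addSn ?subnK // -size_poly_eq0 sh.
have lhg : lead_coef (h * g) = lead_coef p.
  by rewrite lead_coefM lead_coefM lead_coefC lead_coefXn mulr1 divfK.
have Sr : polyIn (p - h * g) by apply: polyInD Sp (polyInN (polyInM Sh Sg)).
have ra : (p - h * g).[a] = 0 by rewrite hornerD hornerN hornerM ga mulr0 subr0.
have [h' Sh' eq_h'] := IH _ (leq_trans (size_sub_lead p0 shg lhg) pk) Sr ra.
exists (h' + h); first exact: polyInD.
by rewrite mulrDl -eq_h' subrK.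
Qed.

(* [g'] has smaller size, so it cannot vanish at [a]. *)
Lemma annihilator_deriv : g^`().[a] != 0.
Proof.
have g_gt1 : (1 < size g)%N.
  rewrite ltnNge; apply/negP => /size1_polyC g_cst.
  by move: g0 ga; rewrite g_cst hornerC => /[swap] ->; rewrite eqxx.
apply/eqP => g'a; have := deriv_neq0 hF g_gt1.
by rewrite (gmin (polyIn_deriv Sg) (lt_size_deriv g0) g'a) eqxx.
Qed.

End MinimalAnnihilator.

Lemma minimal_annihilator g : polyIn g -> g != 0 -> g.[a] = 0 ->
  exists g, [/\ polyIn g, g != 0, g.[a] = 0 &
    forall h, polyIn h -> (size h < size g)%N -> h.[a] = 0 -> h = 0].
Proof.
move=> Sg g0 ga; pose ann n := exists g, [/\ polyIn g, g != 0, g.[a] = 0 & size g = n].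
have [n [[[g' [Sg' g'0 g'a <-]] g'min] _]] :=
  dec_inh_nat_subset_has_unique_least_element ann (fun n => classic _)
    (ex_intro _ _ (ex_intro _ g (And4 Sg g0 ga erefl))).
exists g'; split=> // h Sh hg' ha; apply: NNPP => /eqP h0.
by move/leP: (g'min _ (ex_intro _ h (And4 Sh h0 ha erefl))); rewrite leqNgt hg'.
Qed.

(* Some value [c] for [D a] makes [ext_der c] vanish on all polynomials over
   [S] with root [a]: take [c = - g^D(a) / g'(a)] for a minimal annihilator
   [g] (or anything if [a] is transcendental over [S]). *)
Lemma ext_der_kernel : exists c, forall p, polyIn p -> p.[a] = 0 -> ext_der c p = 0.
Proof.
have [[g [Sg g0 ga]]|transc] :=
  classic (exists g, [/\ polyIn g, g != 0 & g.[a] = 0]); last first.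
  exists 0 => p Sp pa; apply: NNPP => Ep; apply: transc; exists p; split=> //.
  by apply/eqP => p0; apply: Ep; rewrite p0 /ext_der map_poly0 deriv0 !horner0 mul0r addr0.
have {g Sg g0 ga} [g [Sg g0 ga gmin]] := minimal_annihilator Sg g0 ga.
exists (- (map_poly D g).[a] / g^`().[a]) => p Sp pa.
have [h Sh ->] := annihilator_dvd Sg g0 ga gmin Sp pa.
have g'a := annihilator_deriv Sg g0 ga gmin.
by rewrite ext_derM // ga mul0r addr0 /ext_der [g^`().[a] * _]mulrC divfK // subrr mulr0.
Qed.

Definition adjoin : F -> Prop := frac polyIn (horner_eval a).

Lemma adjoin_subfield : subfield adjoin.
Proof. exact: frac_subfield polyIn1 polyInD polyInN polyInM. Qed.

Lemma adjoin_base z : S z -> adjoin z.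
Proof.
move=> Sz; rewrite -[z](hornerC z a) -horner_evalE.
exact: (frac_ev (horner_eval a) polyIn1 (polyInC Sz)).
Qed.

Lemma adjoin_elem : adjoin a.
Proof.
have SX : polyIn 'X by move=> i; rewrite coefX; apply: S_mulrn; exact: (sf1 hS).
by rewrite -[a]hornerX -horner_evalE; exact: (frac_ev (horner_eval a) polyIn1 SX).
Qed.

Lemma derivation_adjoin :
  exists D', derivation adjoin D' /\ forall z, S z -> D' z = D z.
Proof.
have [c ker_c] := ext_der_kernel.
have ED p q : polyIn p -> polyIn q -> ext_der c (p + q) = ext_der c p + ext_der c q.
  exact: ext_derD.
have EM p q : polyIn p -> polyIn q ->
    ext_der c (p * q) = horner_eval a p * ext_der c q + horner_eval a q * ext_der c p.
  by rewrite !horner_evalE; exact: ext_derM.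
have Eker p : polyIn p -> horner_eval a p = 0 -> ext_der c p = 0.
  by rewrite horner_evalE; exact: ker_c.
exists (frac_der polyIn (horner_eval a) (ext_der c)); split.
  exact: frac_der_derivation polyIn1 polyInD polyInN polyInM ED EM Eker.
move=> z Sz; rewrite -[z in LHS](hornerC z a) -horner_evalE.
rewrite (frac_der_ev polyIn1 polyInD polyInN polyInM ED EM Eker (polyInC Sz)).
by rewrite /ext_der map_polyC_id0 ?(der0 hS hD) // hornerC derivC horner0 mul0r addr0.
Qed.

End AdjoinElement.

(* Adjoining finitely many elements one at a time: every derivation of a
   subfield [S] extends to a subfield containing a given list [l]. *)
Lemma derivation_extend (F : fieldType) (hF : [pchar F] =i pred0) (l : seq F)
    (S : F -> Prop) (D : F -> F) : subfield S -> derivation S D ->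
  exists T D', [/\ subfield T, derivation T D',
    forall z, S z -> T z /\ D' z = D z & forall z, z \in l -> T z].
Proof.
elim: l S D => [|a l IH] S D hS hD; first by exists S, D; split.
have [D1 [hD1 D1_ext]] := derivation_adjoin hF a hS hD.
have [T [D' [hT hD' T_ext Tl]]] := IH _ _ (adjoin_subfield a hS) hD1.
exists T, D'; split=> // [z Sz|z].
  have [Tz ->] := T_ext z (adjoin_base a hS Sz); split=> //; exact: D1_ext.
rewrite in_cons => /predU1P [->|]; last exact: Tl.
by have [] := T_ext a (adjoin_elem a hS).
Qed.

Section GenericPoint.
Variables (F : fieldType) (hF : [pchar F] =i pred0) (n : nat) (x : 'I_n -> F).
Hypothesis x_gen : forall p : mpoly n, p != 0 -> meval p x != 0.

(* The partial derivative [d/dx_j] of the field [Q(x)], extended to any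
   finitely generated extension: it sends [x_k] to the Kronecker delta. *)
Lemma generic_partial_derivation (j : nat) (l : seq F) :
  exists T D, [/\ subfield T, derivation T D,
    forall k : 'I_n, T (x k) /\ D (x k) = (k == j :> nat)%:R &
    forall z, z \in l -> T z].
Proof.
pose E p := meval_at x hF (mderiv j p).
have [dD dM] := mderiv_leibniz j n.
have ED p q : True -> True -> E (p + q) = E p + E q by rewrite /E dD rmorphD.
have EM p q : True -> True ->
    E (p * q) = meval_at x hF p * E q + meval_at x hF q * E p.
  by rewrite /E dM rmorphD !rmorphM addrC mulrC [meval_at x hF q * _]mulrC.
have Eker p : True -> meval_at x hF p = 0 -> E p = 0.
  move=> _ /eqP; apply: contraTeq => Ep; apply: x_gen.
  by apply: contraNneq Ep => ->; rewrite /E (leibniz0 (mderiv_leibniz j n)) rmorph0.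
(* The subring used for [Q(x)] is the whole polynomial ring. *)
have PD (p q : mpoly n) : True -> True -> True by [].
have PN (p : mpoly n) : True -> True by [].
have [T [D [hT hD T_ext Tl]]] := derivation_extend hF l
  (frac_subfield (meval_at x hF) I PD PN PD)
  (frac_der_derivation I PD PN PD ED EM Eker).
exists T, D; split=> // k.
have xk : x k = meval_at x hF (mvar n k) by rewrite /meval_at meval_mvar.
have Qxk : frac (fun=> True) (meval_at x hF) (x k) by rewrite xk; exact: frac_ev.
have [Txk ->] := T_ext (x k) Qxk.
split=> //; rewrite xk (frac_der_ev I PD PN PD ED EM Eker I).
by rewrite /E mderiv_mvar // rmorph_nat.
Qed.
End GenericPoint.

Section RankMinor.
Variable F : fieldType.

Lemma rank_mxsub_le m n m' n' (f : 'I_m' -> 'I_m) (g : 'I_n' -> 'I_n)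
  (A : 'M[F]_(m, n)) : (\rank (mxsub f g A) <= \rank A)%N.
Proof.
rewrite -{1}[A]mul1mx mxsub_mul; apply: leq_trans (mxrankM_maxr _ _) _.
by rewrite -{1}[A]mulmx1 -mulmx_colsub; exact: mxrankM_maxl.
Qed.

Lemma rank_minor m n (A : 'M[F]_(m, n)) :
  exists (f : 'I_(\rank A) -> 'I_m) (g : 'I_(\rank A) -> 'I_n),
    \det (mxsub f g A) != 0.
Proof.
pose B := (rowsub (maxrankfun A) A)^T.
have rkB : \rank B = \rank A by rewrite mxrank_tr; apply/eqP; exact: maxrowsub_free.
pose K := castmx (rkB, erefl (\rank A)) (rowsub (maxrankfun B) B).
have uK : K \in unitmx by rewrite -row_free_unit row_free_castmx maxrowsub_free.
exists (maxrankfun A), (fun k => maxrankfun B (cast_ord (esym rkB) k)).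
have -> : mxsub (maxrankfun A) (fun k => maxrankfun B (cast_ord (esym rkB) k)) A = K^T.
  apply/matrixP => i k; rewrite !mxE castmxE !mxE /=.
  by congr (A (maxrankfun A _) _); apply: val_inj.
by rewrite det_tr -unitfE -unitmxE.
Qed.

End RankMinor.

(* Evaluating a polynomial matrix at a generic point gives maximal rank:
   a nonvanishing minor at [y] is a nonzero polynomial minor, hence does
   not vanish at the generic point [x]. *)
Lemma rank_eval_generic (F : fieldType) (hF : [pchar F] =i pred0) (n p q : nat)
    (M : 'M[mpoly n]_(p, q)) (x y : 'I_n -> F) :
    (forall r : mpoly n, r != 0 -> meval r x != 0) ->
  (\rank (map_mx (meval_at y hF) M) <= \rank (map_mx (meval_at x hF) M))%N.
Proof.
move=> x_gen; have [f [g det_y]] := rank_minor (map_mx (meval_at y hF) M).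
have det_x : \det (mxsub f g (map_mx (meval_at x hF) M)) != 0.
  rewrite -map_mxsub det_map_mx; apply: x_gen.
  by apply: contraNneq det_y; rewrite -map_mxsub det_map_mx => ->; rewrite rmorph0.
have := rank_mxsub_le f g (map_mx (meval_at x hF) M).
by rewrite mxrank_unit // unitmxE unitfE.
Qed.

Section RigidityMatrix.
Variables (F : fieldType) (v d : nat) (e : rel 'I_v).

Definition coords (y : framework F v d) : 'I_(v * d) -> F := fun k => mxvec y 0 k.

Definition coord_var (t : 'I_v) (i : 'I_d) : mpoly (v * d) := mvar (v * d) (mxvec_index t i).

Definition edge_poly (p : 'I_v * 'I_v) : 'M[mpoly (v * d)]_(v, d) :=
  \matrix_(s, j) (if s == p.1 then coord_var p.1 j - coord_var p.2 j
                  else if s == p.2 then coord_var p.2 j - coord_var p.1 j else 0).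

Definition rigidity_poly : 'M[mpoly (v * d)]_(#|edges e|, v * d) :=
  \matrix_(k < #|edges e|) mxvec (edge_poly (enum_val k)).

Lemma rigidity_poly_eval (hF : [pchar F] =i pred0) (y : framework F v d) :
  map_mx (meval_at (coords y) hF) rigidity_poly = rigidity_matrix e y.
Proof.
have X t j : meval_at (coords y) hF (coord_var t j) = y t j.
  by rewrite /meval_at (meval_mvar hF) /coords /= mxvecE.
apply/matrixP => r c; rewrite !mxE; case/mxvec_indexP: c => s i.
by rewrite !mxvecE !mxE; case: ifP => _; [|case: ifP => _]; rewrite ?rmorphB /= ?X ?rmorph0.
Qed.

Lemma sum_mxvec_index (R : nmodType) m n (f : 'I_(m * n) -> R) :
  \sum_k f k = \sum_i \sum_j f (mxvec_index i j).
Proof.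
by rewrite pair_bigA (reindex _ (curry_mxvec_bij _ _)); apply: eq_bigr => -[i j].
Qed.

Lemma edge_neq (r : 'I_#|edges e|) : (enum_val r).1 != (enum_val r).2.
Proof.
have := enum_valP r; rewrite inE => /andP [_].
by apply: contraTneq => ->; rewrite ltnn.
Qed.

Lemma edge_rel (r : 'I_#|edges e|) : e (enum_val r).1 (enum_val r).2.
Proof. by have := enum_valP r; rewrite inE => /andP []. Qed.

Lemma rigidity_row_dot (y Z : framework F v d) (r : 'I_#|edges e|) :
  let t := (enum_val r).1 in let u := (enum_val r).2 in
  (rigidity_matrix e y *m (mxvec Z)^T) r 0 = \sum_i (y t i - y u i) * (Z t i - Z u i).
Proof.
move=> t u; have tu : t != u := edge_neq r.
rewrite mxE sum_mxvec_index exchange_big; apply: eq_bigr => i _.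
rewrite (bigD1 t) // (bigD1 u) 1?eq_sym //= big1 => [|s /andP [su st]].
  rewrite !mxE !mxvecE !mxE -/t -/u eqxx eq_sym (negbTE tu) eqxx addr0; ring.
by rewrite !mxE mxvecE !mxE -/t -/u (negbTE st) (negbTE su) mul0r.
Qed.

End RigidityMatrix.

Section FrameworkRank.
Variables (F : fieldType) (hF : [pchar F] =i pred0) (v d : nat) (e : rel 'I_v).

Lemma rank_rigidity_generic_max (rho sigma : framework F v d) : generic rho ->
  (\rank (rigidity_matrix e sigma) <= \rank (rigidity_matrix e rho))%N.
Proof. by move=> gen; rewrite -!(rigidity_poly_eval e hF); exact: rank_eval_generic. Qed.

Lemma der_edge_length (T : F -> Prop) (D : F -> F) (y : framework F v d)
    (r : 'I_#|edges e|) : subfield T -> derivation T D -> (forall t i, T (y t i)) ->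
  let t := (enum_val r).1 in let u := (enum_val r).2 in
  D (sqlen (row t y - row u y)) = 2 * (rigidity_matrix e y *m (mxvec (map_mx D y))^T) r 0.
Proof.
move=> hT hD Ty t u; rewrite rigidity_row_dot -/t -/u.
have Tw i : T ((row t y - row u y) 0 i) by rewrite !mxE; apply: (sfD hT) (sfN hT _).
rewrite (der_sqlen hT hD Tw); congr (_ * _); apply: eq_bigr => i _.
by rewrite !mxE (derB hT hD).
Qed.

(* Each column [j] of the rigidity matrix of a generic [rho] lies in the
   column space of that of an equivalent [sigma]: differentiate the
   equations [|sigma(t) - sigma(u)|^2 = |rho(t) - rho(u)|^2] along an
   extension of [d/drho_j]. *)
Lemma rigidity_col_generic (rho sigma : framework F v d) (j : 'I_(v * d)) :
  generic rho -> equivalent e rho sigma ->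
  exists w : 'cV_(v * d), col j (rigidity_matrix e rho) = rigidity_matrix e sigma *m w.
Proof.
move=> gen heq.
have [T [D [hT hD Trho Tsigma]]] :=
  generic_partial_derivation hF gen j [seq coords sigma k | k <- enum 'I_(v * d)].
have Trho' t i : T (rho t i) by have [] := Trho (mxvec_index t i); rewrite /coords mxvecE.
have Tsigma' t i : T (sigma t i).
  by rewrite -(mxvecE sigma); apply: Tsigma; apply: map_f; rewrite mem_enum.
have Drho : mxvec (map_mx D rho) = delta_mx 0 j.
  apply/rowP => k; have [_ Dk] := Trho k.
  by rewrite -map_mxvec !mxE Dk eqxx.
exists (mxvec (map_mx D sigma))^T; apply/colP => r.
have /= := der_edge_length r hT hD Trho'.
rewrite heq ?edge_rel // (der_edge_length r hT hD Tsigma') Drho trmx_delta -colE.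
by move/(mulfI (_ : (2 : F) != 0)) => <-; rewrite // ((pcharf0P F).1 hF 2).
Qed.

(* Hence [R(rho) = R(sigma) W] for some matrix [W]. *)
Lemma rank_rigidity_equivalent (rho sigma : framework F v d) :
  generic rho -> equivalent e rho sigma ->
  (\rank (rigidity_matrix e rho) <= \rank (rigidity_matrix e sigma))%N.
Proof.
move=> gen heq; have [w Hw] := fin_all_exists (fun j => rigidity_col_generic j gen heq).
have -> : rigidity_matrix e rho = rigidity_matrix e sigma *m \matrix_(k, j) w j k 0.
  apply/matrixP => r j; have /colP/(_ r) := Hw j; rewrite !mxE => ->.
  by apply: eq_bigr => k _; rewrite !mxE.
exact: mxrankM_maxl.
Qed.

End FrameworkRank.

Unset Implicit Arguments.

Theorem mainTheorem12 (F : closedFieldType) (hF : [pchar F] =i pred0)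
  (v d : nat) (e : rel 'I_v) (e_sym : symmetric e) (e_irr : irreflexive e)
  (hGLR : gen_loc_rigid F d e)
  (rho sigma : framework F v d)
  (hrho : generic rho) (heq : equivalent e rho sigma) :
  inf_rigid e sigma.
Proof.
rewrite /inf_rigid -(hGLR rho hrho); apply/eqP; rewrite eqn_leq.
by rewrite rank_rigidity_generic_max // rank_rigidity_equivalent.
Qed.
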